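(* Assume the standing assumptions (A1)–(A3). Let \[ v^*_{IA}:=\min_{x,\lambda,Y}\ c^Tx+\lambda\ \ \text{s.t.}\ \ x\in\mathcal X,\ \ \lambda g_1g_1^T-\tfrac12G(x)+\tfrac12H(Y)\in\mathrm{IA}(\widehat{\mathcal U}\times\mathbb R^m_+), \] with $\lambda\in\mathbb R$, $Y\in\mathbb R^{n_2\times k}$. Then $v^*_{IA}=v^*_{Aff}$.
   Context: Data: $A\in\mathbb R^{m\times n_1}$, $B\in\mathbb R^{m\times n_2}$, $c\in\mathbb R^{n_1}$, $d\in\mathbb R^{n_2}$, $F\in\mathbb R^{m\times k}$, $\mathcal X\subseteq\mathbb R^{n_1}$ closed convex. $\widehat{\mathcal U}\subseteq\mathbb R_+\times\mathbb R^{k-1}$ closed, convex, full-dimensional cone, dual cone $\widehat{\mathcal U}^*$; $\mathcal U:=\{u\in\widehat{\mathcal U}:u_1=1\}$ nonempty compact. $e_1\in\mathbb R^k$ first basis vector, $g_1=(e_1;0)\in\mathbb R^{k+m}$. (RLP): $v^*_{RLP}:=\inf\{c^Tx+\sup_{u\in\mathcal U}d^Ty(u)\}$ over $x\in\mathcal X$, $y:\mathcal U\to\mathbb R^{n_2}$ with $Ax+By(u)\ge Fu\ \forall u\in\mathcal U$. (A1) $\mathcal X,\widehat{\mathcal U}$ tractable; (A2) (RLP) feasible; (A3) $v^*_{RLP}$ finite. $v^*_{Aff}:=\inf\{c^Tx+\sup_{u\in\mathcal U}d^TYu\}$ over $x\in\mathcal X$, $Y\in\mathbb R^{n_2\times k}$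 with $Ax+BYu\ge Fu\ \forall u\in\mathcal U$. $G(x):=\begin{pmatrix}0&(F-Axe_1^T)^T\\ F-Axe_1^T&0\end{pmatrix}$, $H(Y):=\begin{pmatrix}-e_1d^TY-Y^Tde_1^T&(BY)^T\\ BY&0\end{pmatrix}$. $\mathrm{IA}(\widehat{\mathcal U}\times\mathbb R^m_+):=\{S=\begin{pmatrix}S_{11}&S_{21}^T\\S_{21}&S_{22}\end{pmatrix}\in\mathcal S^{k+m}: S_{11}=e_1\alpha^T+\alpha e_1^T,\ \alpha\in\widehat{\mathcal U}^*,\ \text{each row of }S_{21}\text{ in }\widehat{\mathcal U}^*,\ S_{22}\ge0\text{ entrywise}\}$. *)

From Stdlib Require Import Reals.
From mathcomp Require Import all_boot.
Set Implicit Arguments. Unset Strict Implicit. Unset Printing Implicit Defensive.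
Local Open Scope R_scope.

Definition vec (n : nat) := 'I_n -> R.
Definition mat (m n : nat) := 'I_m -> 'I_n -> R.

Definition dot (n : nat) (u v : vec n) : R := \big[Rplus/R0]_(i < n) (u i * v i).
Definition mulmv (m n : nat) (A : mat m n) (x : vec n) : vec m :=
  fun r => \big[Rplus/R0]_(j < n) (A r j * x j).
Definition mulmm (m n p : nat) (A : mat m n) (Y : mat n p) : mat m p :=
  fun r j => \big[Rplus/R0]_(l < n) (A r l * Y l j).

(* first standard basis vector e_1 (index 0) and first coordinate u_1 *)
Definition e1 (k : nat) : vec k := fun i => if nat_of_ord i == 0%N then 1 else 0.
Arguments e1 : clear implicits.
Definition coord1 (k : nat) (u : vec k) : R := dot (e1 k) u.

Definition closedR (n : nat) (S : vec n -> Prop) : Prop :=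
  forall (u : nat -> vec n) (v : vec n),
    (forall p, S (u p)) -> (forall i, Un_cv (fun p => u p i) (v i)) -> S v.
Definition boundedR (n : nat) (S : vec n -> Prop) : Prop :=
  exists M, forall u, S u -> forall i, Rabs (u i) <= M.
Definition compactR (n : nat) (S : vec n -> Prop) : Prop :=
  closedR S /\ boundedR S.
Definition convexR (n : nat) (S : vec n -> Prop) : Prop :=
  forall u v t, S u -> S v -> 0 <= t <= 1 -> S (fun i => t * u i + (1 - t) * v i).
Definition is_cone (n : nat) (S : vec n -> Prop) : Prop :=
  forall u t, S u -> 0 <= t -> S (fun i => t * u i).
Definition full_dim (n : nat) (S : vec n -> Prop) : Prop :=
  exists u0 eps, 0 < eps /\ forall v, (forall i, Rabs (v i - u0 i) < eps) -> S v.
Definition dual_cone (n : nat) (S : vec n -> Prop) : vec n -> Prop :=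
  fun w => forall u, S u -> 0 <= dot w u.

Definition Ucal (k : nat) (Uh : vec k -> Prop) : vec k -> Prop :=
  fun u => Uh u /\ coord1 u = 1.

Definition blk (k m : nat) (P : mat k k) (Q : mat k m) (Rm : mat m k) (S : mat m m)
  : mat (k + m) (k + m) :=
  fun i j => match split i, split j with
             | inl a, inl b => P a b
             | inl a, inr b => Q a b
             | inr a, inl b => Rm a b
             | inr a, inr b => S a b
             end.

Definition transp (m n : nat) (A : mat m n) : mat n m := fun j i => A i j.

Definition g1 (k m : nat) : vec (k + m) :=
  fun i => match split i with inl a => e1 k a | inr _ => 0 end.
Arguments g1 : clear implicits.

Definition FAx (m n1 k : nat) (A : mat m n1) (F : mat m k) (x : vec n1) : mat m k :=
  fun r j => F r j - mulmv A x r * e1 k j.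

Definition Gmat (m n1 k : nat) (A : mat m n1) (F : mat m k) (x : vec n1)
  : mat (k + m) (k + m) :=
  blk (fun _ _ => 0) (transp (FAx A F x)) (FAx A F x) (fun _ _ => 0).

Definition dTY (n2 k : nat) (d : vec n2) (Y : mat n2 k) : vec k :=
  fun j => \big[Rplus/R0]_(l < n2) (d l * Y l j).

Definition Hmat (m n2 k : nat) (B : mat m n2) (d : vec n2) (Y : mat n2 k)
  : mat (k + m) (k + m) :=
  blk (fun i j => - (e1 k i * dTY d Y j) - dTY d Y i * e1 k j)
      (transp (mulmm B Y)) (mulmm B Y) (fun _ _ => 0).

Definition IAmat (m n1 n2 k : nat) (A : mat m n1) (B : mat m n2) (d : vec n2)
  (F : mat m k) (x : vec n1) (lam : R) (Y : mat n2 k) : mat (k + m) (k + m) :=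
  fun i j => lam * (g1 k m i * g1 k m j) - / 2 * Gmat A F x i j + / 2 * Hmat B d Y i j.

Definition symmetric (n : nat) (S : mat n n) : Prop := forall i j, S i j = S j i.

Definition IA (k m : nat) (Uh : vec k -> Prop) (S : mat (k + m) (k + m)) : Prop :=
  symmetric S /\
  (exists alpha : vec k, dual_cone Uh alpha /\
     forall i j : 'I_k, S (lshift m i) (lshift m j) = e1 k i * alpha j + alpha i * e1 k j) /\
  (forall r : 'I_m, dual_cone Uh (fun j => S (rshift k r) (lshift m j))) /\
  (forall r s : 'I_m, 0 <= S (rshift k r) (rshift k s)).

(* (RLP): feasibility and the set of attainable objective levels
   (t is attainable iff some feasible (x,y) has c^T x + sup_u d^T y(u) <= t) *)
Definition RLP_feasible (m n1 n2 k : nat) (A : mat m n1) (B : mat m n2) (F : mat m k)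
  (X : vec n1 -> Prop) (Uh : vec k -> Prop) (x : vec n1) (y : vec k -> vec n2) : Prop :=
  X x /\ forall u, Ucal Uh u -> forall r, mulmv F u r <= mulmv A x r + mulmv B (y u) r.

Definition RLP_level (m n1 n2 k : nat) (A : mat m n1) (B : mat m n2) (c : vec n1)
  (d : vec n2) (F : mat m k) (X : vec n1 -> Prop) (Uh : vec k -> Prop) (t : R) : Prop :=
  exists x y, RLP_feasible A B F X Uh x y /\
    forall u, Ucal Uh u -> dot c x + dot d (y u) <= t.

(* v*_RLP finite: attainable levels nonempty (inf < +oo) and bounded below (inf > -oo) *)
Definition RLP_finite (m n1 n2 k : nat) (A : mat m n1) (B : mat m n2) (c : vec n1)
  (d : vec n2) (F : mat m k) (X : vec n1 -> Prop) (Uh : vec k -> Prop) : Prop :=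
  (exists t, RLP_level A B c d F X Uh t) /\
  (exists L, forall t, RLP_level A B c d F X Uh t -> L <= t).

Definition Aff_level (m n1 n2 k : nat) (A : mat m n1) (B : mat m n2) (c : vec n1)
  (d : vec n2) (F : mat m k) (X : vec n1 -> Prop) (Uh : vec k -> Prop) (t : R) : Prop :=
  exists (x : vec n1) (Y : mat n2 k), X x /\
    (forall u, Ucal Uh u -> forall r,
        mulmv F u r <= mulmv A x r + mulmv B (mulmv Y u) r) /\
    (forall u, Ucal Uh u -> dot c x + dot d (mulmv Y u) <= t).

Definition IA_value (m n1 n2 k : nat) (A : mat m n1) (B : mat m n2) (c : vec n1)
  (d : vec n2) (F : mat m k) (X : vec n1 -> Prop) (Uh : vec k -> Prop) (t : R) : Prop :=
  exists (x : vec n1) (lam : R) (Y : mat n2 k),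
    X x /\ IA Uh (IAmat A B d F x lam Y) /\ t = dot c x + lam.

(* Reading off the blocks of  lam g1 g1^T - G(x)/2 + H(Y)/2 : the top-left block is
   e1 alpha^T + alpha e1^T exactly for alpha = (lam e1 - Y^T d)/2, the rows of the
   off-diagonal block are those of (A x e1^T + B Y - F)/2, and the bottom-right block
   is 0.  A linear functional lies in the dual cone of Uhat iff it is nonnegative on
   U = {u in Uhat | u_1 = 1}: rescale when u_1 > 0, and when u_1 = 0 perturb u along a
   point of U.  Hence (x, lam, Y) is IA-feasible iff (x, Y) is a robustly feasible
   affine policy with lam >= sup_U d^T Y u, and both problems have the same set of
   objective values. *)

From Pilot Require Import Defs.
From Stdlib Require Import Reals Lra FunctionalExtensionality.
From mathcomp Require Import all_boot.
From HB Require Import structures.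
Set Implicit Arguments. Unset Strict Implicit. Unset Printing Implicit Defensive.
Local Open Scope R_scope.

HB.instance Definition _ := Monoid.isComLaw.Build R R0 Rplus
  (fun x y z => esym (Rplus_assoc x y z)) Rplus_comm Rplus_0_l.
HB.instance Definition _ := Monoid.isMulLaw.Build R R0 Rmult Rmult_0_l Rmult_0_r.
HB.instance Definition _ := Monoid.isAddLaw.Build R Rmult Rplus
  Rmult_plus_distr_r Rmult_plus_distr_l.

Lemma dot_linear (n : nat) (w u v : vec n) (a b : R) :
  dot w (fun i => a * u i + b * v i) = a * dot w u + b * dot w v.
Proof. rewrite /dot !big_distrr -big_split /=; apply: eq_bigr => i _; ring. Qed.

Lemma dot_linear_l (n : nat) (w v u : vec n) (a b : R) :
  dot (fun i => a * w i + b * v i) u = a * dot w u + b * dot v u.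
Proof. rewrite /dot !big_distrr -big_split /=; apply: eq_bigr => i _; ring. Qed.

Lemma dot_sub_l (n : nat) (w v u : vec n) :
  dot (fun i => w i - v i) u = dot w u - dot v u.
Proof.
have -> : (fun i => w i - v i) = (fun i => 1 * w i + -1 * v i).
  by apply: functional_extensionality => i; ring.
by rewrite dot_linear_l; ring.
Qed.

Lemma dot_scale (n : nat) (w u : vec n) (t : R) :
  dot w (fun i => t * u i) = t * dot w u.
Proof. rewrite /dot big_distrr /=; apply: eq_bigr => i _; ring. Qed.

Lemma dot_dTY (n p : nat) (w : vec n) (Q : mat n p) (u : vec p) :
  dot (dTY w Q) u = dot w (mulmv Q u).
Proof.
rewrite /dot /dTY /mulmv.
under eq_bigr => j _ do rewrite big_distrl /=.
rewrite exchange_big /=; apply: eq_bigr => l _.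
rewrite big_distrr /=; apply: eq_bigr => j _; ring.
Qed.

Lemma dim_gt0_of_coord1 (k : nat) (u : vec k) : coord1 u = 1 -> (0 < k)%N.
Proof.
case: k u => // u; rewrite /coord1 /dot big_ord0 => u1.
by have := R1_neq_R0; rewrite -u1.
Qed.

Lemma nonneg_of_nonneg_perturb (a b : R) :
  (forall e, 0 < e -> 0 <= a + e * b) -> 0 <= a.
Proof.
move=> perturb; case: (Rle_lt_dec b 0) => b_sign.
  by have := perturb 1 Rlt_0_1; lra.
case: (Rle_lt_dec 0 a) => // a_neg.
have := perturb (- a / (2 * b)) ltac:(apply: Rdiv_lt_0_compat; lra).
have -> : a + - a / (2 * b) * b = a / 2 by field; lra.
lra.
Qed.

Lemma cone_add (n : nat) (S : vec n -> Prop) (u v : vec n) :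
  convexR S -> is_cone S -> S u -> S v -> S (fun i => u i + v i).
Proof.
move=> Sconv Scone Su Sv.
have := Sconv _ _ (/ 2) (Scone u 2 Su ltac:(lra)) (Scone v 2 Sv ltac:(lra)) ltac:(lra).
congr S; apply: functional_extensionality => i; field.
Qed.

Section DualCone.
Variables (k : nat) (Uh : vec k -> Prop).
Hypotheses (Uconv : convexR Uh) (Ucone : is_cone Uh)
  (Upos : forall u, Uh u -> 0 <= coord1 u) (Une : exists u, Ucal Uh u).

Lemma dual_cone_of_Ucal (w : vec k) :
  (forall u, Ucal Uh u -> 0 <= dot w u) -> dual_cone Uh w.
Proof.
move=> wU.
have w_pos : forall u, Uh u -> 0 < coord1 u -> 0 <= dot w u.
  move=> u Uu u1_pos.
  have U_normal : Ucal Uh (fun i => / coord1 u * u i).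
    split; first by apply: Ucone => //; left; apply: Rinv_0_lt_compat.
    by rewrite /coord1 dot_scale -/(coord1 u); field; lra.
  have := wU _ U_normal; rewrite dot_scale => scaled_pos.
  have -> : dot w u = coord1 u * (/ coord1 u * dot w u) by field; lra.
  apply: Rmult_le_pos => //; lra.
move=> u Uu; case: (Upos Uu) => [|u1_0]; first exact: w_pos.
have [u0 [Uu0 u01]] := Une.
apply: (nonneg_of_nonneg_perturb (b := dot w u0)) => e e_pos.
have Ushift : Uh (fun i => 1 * u i + e * u0 i).
  by apply: cone_add => //; apply: Ucone => //; lra.
rewrite -[dot w u]Rmult_1_l -dot_linear; apply: w_pos => //.
by rewrite /coord1 dot_linear -/(coord1 u) -/(coord1 u0) -u1_0 u01; lra.
Qed.

End DualCone.

Lemma split_lshift (k m : nat) (i : 'I_k) : split (lshift m i) = inl i.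
Proof. exact: (unsplitK (inl i)). Qed.

Lemma split_rshift (k m : nat) (i : 'I_m) : split (rshift k i) = inr i.
Proof. exact: (unsplitK (inr i)). Qed.

Definition ia_alpha (n2 k : nat) (d : vec n2) (Y : mat n2 k) (lam : R) : vec k :=
  fun j => lam / 2 * e1 k j - / 2 * dTY d Y j.

Lemma dot_ia_alpha (n2 k : nat) (d : vec n2) (Y : mat n2 k) (lam : R) (u : vec k) :
  dot (ia_alpha d Y lam) u = lam / 2 * coord1 u - / 2 * dot d (mulmv Y u).
Proof.
rewrite -dot_dTY /ia_alpha /coord1.
have -> : (fun j => lam / 2 * e1 k j - / 2 * dTY d Y j)
        = (fun j => lam / 2 * e1 k j + - / 2 * dTY d Y j).
  by apply: functional_extensionality => j; ring.
rewrite dot_linear_l; ring.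
Qed.

Lemma e1_outer_sym_inj (k : nat) (a b : vec k) : (0 < k)%N ->
  (forall i j, e1 k i * a j + a i * e1 k j = e1 k i * b j + b i * e1 k j) ->
  forall j, a j = b j.
Proof.
move=> k_pos ab j; pose i0 := Ordinal k_pos.
have e1_i0 : e1 k i0 = 1 by [].
have := ab i0 i0; have := ab i0 j; rewrite e1_i0 => abj ab0.
have ab_i0 : a i0 = b i0 by lra.
by rewrite ab_i0 in abj; lra.
Qed.

Section IAmatEntries.
Variables (m n1 n2 k : nat) (A : mat m n1) (B : mat m n2) (d : vec n2)
  (F : mat m k) (x : vec n1) (lam : R) (Y : mat n2 k).
Let S := IAmat A B d F x lam Y.

Lemma IAmat_symmetric : Defs.symmetric S.
Proof.
move=> i j; rewrite /S /IAmat /Gmat /Hmat /blk /g1 /transp.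
by case: (split i) => a; case: (split j) => b; ring.
Qed.

Lemma IAmat_ll (i j : 'I_k) :
  S (lshift m i) (lshift m j) =
  e1 k i * ia_alpha d Y lam j + ia_alpha d Y lam i * e1 k j.
Proof.
by rewrite /S /IAmat /Gmat /Hmat /blk /g1 /ia_alpha !split_lshift /=; field.
Qed.

Lemma IAmat_rl (r : 'I_m) (j : 'I_k) :
  S (rshift k r) (lshift m j) = / 2 * (mulmv A x r * e1 k j + mulmm B Y r j - F r j).
Proof.
by rewrite /S /IAmat /Gmat /Hmat /blk /g1 split_lshift split_rshift /FAx; ring.
Qed.

Lemma IAmat_rr (r s : 'I_m) : S (rshift k r) (rshift k s) = 0.
Proof. by rewrite /S /IAmat /Gmat /Hmat /blk /g1 !split_rshift; ring. Qed.

Lemma dot_IAmat_row (r : 'I_m) (u : vec k) :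
  dot (fun j => S (rshift k r) (lshift m j)) u =
  / 2 * (mulmv A x r * coord1 u + mulmv B (mulmv Y u) r - mulmv F u r).
Proof.
have -> : (fun j => S (rshift k r) (lshift m j))
        = (fun j => / 2 * mulmv A x r * e1 k j + / 2 * (dTY (B r) Y j - F r j)).
  apply: functional_extensionality => j; rewrite IAmat_rl.
  by change (mulmm B Y r j) with (dTY (B r) Y j); ring.
rewrite dot_linear_l dot_sub_l dot_dTY.
change (mulmv B (mulmv Y u) r) with (dot (B r) (mulmv Y u)).
by change (mulmv F u r) with (dot (F r) u); rewrite /coord1; ring.
Qed.

End IAmatEntries.

Section IAReformulation.
Variables (m n1 n2 k : nat) (A : mat m n1) (B : mat m n2) (c : vec n1)
  (d : vec n2) (F : mat m k) (X : vec n1 -> Prop) (Uh : vec k -> Prop).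
Hypotheses (Uconv : convexR Uh) (Ucone : is_cone Uh)
  (Upos : forall u, Uh u -> 0 <= coord1 u) (Une : exists u, Ucal Uh u).

Lemma IA_IAmat_iff (x : vec n1) (lam : R) (Y : mat n2 k) :
  IA Uh (IAmat A B d F x lam Y) <->
  (forall u, Ucal Uh u -> forall r,
      mulmv F u r <= mulmv A x r + mulmv B (mulmv Y u) r) /\
  (forall u, Ucal Uh u -> dot d (mulmv Y u) <= lam).
Proof.
split.
- move=> [_ [[alpha [alpha_dual alpha_ll]] [rows_dual _]]].
  have alpha_eq : alpha = ia_alpha d Y lam.
    have [u0 [_ u01]] := Une.
    apply: functional_extensionality.
    apply: (e1_outer_sym_inj (dim_gt0_of_coord1 u01)) => i j.
    by rewrite -alpha_ll IAmat_ll.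
  rewrite {}alpha_eq in alpha_dual; split=> u [Uu u1].
    by move=> r; have := rows_dual r u Uu; rewrite dot_IAmat_row u1; lra.
  by have := alpha_dual u Uu; rewrite dot_ia_alpha u1; lra.
- move=> [feasible bounded]; split; first exact: IAmat_symmetric.
  split; [exists (ia_alpha d Y lam); split | split].
  + apply: dual_cone_of_Ucal => // u [Uu u1].
    by have := bounded u (conj Uu u1); rewrite dot_ia_alpha u1; lra.
  + exact: IAmat_ll.
  + move=> r; apply: dual_cone_of_Ucal => // u [Uu u1].
    by have := feasible u (conj Uu u1) r; rewrite dot_IAmat_row u1; lra.
  + by move=> r s; rewrite IAmat_rr; apply: Rle_refl.
Qed.

Lemma IA_value_iff_Aff_level (t : R) :
  IA_value A B c d F X Uh t <-> Aff_level A B c d F X Uh t.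
Proof.
split.
- move=> [x [lam [Y [Xx [/IA_IAmat_iff [feasible bounded] ->]]]]].
  exists x, Y; split=> //; split=> // u Uu.
  by have := bounded u Uu; lra.
- move=> [x [Y [Xx [feasible bounded]]]].
  exists x, (t - dot c x), Y; split=> //; split; last by ring.
  apply/IA_IAmat_iff; split=> // u Uu.
  by have := bounded u Uu; lra.
Qed.

End IAReformulation.

Theorem theorem2 (m n1 n2 k : nat) (A : mat m n1) (B : mat m n2) (c : vec n1)
  (d : vec n2) (F : mat m k) (X : vec n1 -> Prop) (Uh : vec k -> Prop)
  (HXc : closedR X) (HXv : convexR X)
  (HUc : closedR Uh) (HUv : convexR Uh) (HUk : is_cone Uh) (HUf : full_dim Uh)
  (HUpos : forall u, Uh u -> 0 <= coord1 u)
  (HUne : exists u, Ucal Uh u) (HUcpt : compactR (Ucal Uh))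
  (HA2 : exists x y, RLP_feasible A B F X Uh x y)
  (HA3 : RLP_finite A B c d F X Uh) :
  forall r : R,
    (forall t, IA_value A B c d F X Uh t -> r <= t) <->
    (forall t, Aff_level A B c d F X Uh t -> r <= t).
Proof.
move=> r; have values_eq := IA_value_iff_Aff_level A B c d F X HUv HUk HUpos HUne.
by split=> lower t /values_eq; apply: lower.
Qed.
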